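(* Let $X$ be a real Banach space, $f\in\Gamma_0(X)$, $f(\bar x)=0$, and let $x^*\in\mathrm{bd}\,\partial f(\bar x)$. Let $\xi>0$, let $\hat x^*\in X^*\setminus\partial f(\bar x)$ with $\|\hat x^*-x^*\|<\xi$, let $\hat x\in X\setminus\{\bar x\}$ satisfy $f(\hat x)<\langle \hat x^*,\hat x-\bar x\rangle$, and let $z^*\in X^*$ with $\|z^*\|=1$ and $\langle z^*,\hat x-\bar x\rangle=\|\hat x-\bar x\|$. Define $g(u):=f(u)+\langle -x^*+\xi z^*,u-\bar x\rangle$ for $u\in X$. Then $\mathrm{Er}\,g(\bar x)\le 2\xi$.
   Context: $\Gamma_0(X)$ denotes the class of extended-real-valued proper convex lower semicontinuous functions on $X$. For convex $f$, $\partial f(x):=\{x^*\in X^*\mid \langle x^*,u-x\rangle\le f(u)-f(x)\ \forall u\in X\}$; $\mathrm{bd}$ denotes the boundary in the norm topology of $X^*$. $S_g:=\{x\mid g(x)\le 0\}$, $d(x,S)=\inf_{u\in S}\|u-x\|$ ($d(x,\emptyset)=+\infty$), and $\mathrm{Er}\,g(\bar x):=\liminf_{x\to\bar x,\ g(x)>0}\frac{g(x)}{d(x,S_g)}$. *)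

From Stdlib Require Import Reals.
Open Scope R_scope.

Record BanachSpace := {
  Bcar :> Type;
  vadd : Bcar -> Bcar -> Bcar;
  vzero : Bcar;
  vopp : Bcar -> Bcar;
  vscal : R -> Bcar -> Bcar;
  vnorm : Bcar -> R;
  vadd_assoc : forall x y z, vadd x (vadd y z) = vadd (vadd x y) z;
  vadd_comm : forall x y, vadd x y = vadd y x;
  vadd_0 : forall x, vadd x vzero = x;
  vadd_opp : forall x, vadd x (vopp x) = vzero;
  vscal_1 : forall x, vscal 1 x = x;
  vscal_assoc : forall a b x, vscal a (vscal b x) = vscal (a * b) x;
  vscal_distr_v : forall a x y, vscal a (vadd x y) = vadd (vscal a x) (vscal a y);
  vscal_distr_s : forall a b x, vscal (a + b) x = vadd (vscal a x) (vscal b x);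
  vnorm_eq0 : forall x, vnorm x = 0 -> x = vzero;
  vnorm_scal : forall a x, vnorm (vscal a x) = Rabs a * vnorm x;
  vnorm_triangle : forall x y, vnorm (vadd x y) <= vnorm x + vnorm y;
  vcomplete : forall u : nat -> Bcar,
    (forall eps, 0 < eps -> exists N, forall m n, (N <= m)%nat -> (N <= n)%nat ->
        vnorm (vadd (u m) (vopp (u n))) < eps) ->
    exists l, forall eps, 0 < eps -> exists N, forall n, (N <= n)%nat ->
        vnorm (vadd (u n) (vopp l)) < eps
}.

Arguments vadd {_}. Arguments vzero {_}. Arguments vopp {_}.
Arguments vscal {_}. Arguments vnorm {_}.

Definition vsub {X : BanachSpace} (x y : X) : X := vadd x (vopp y).

Record dual (X : BanachSpace) := {
  dfun :> X -> R;
  dlin : forall a (x y : X), dfun (vadd (vscal a x) y) = a * dfun x + dfun y;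
  dbounded : exists M, forall x : X, Rabs (dfun x) <= M * vnorm x
}.

Definition dnorm_is {X : BanachSpace} (phi : X -> R) (r : R) : Prop :=
  is_lub (fun t => exists x : X, vnorm x <= 1 /\ t = Rabs (phi x)) r.

Definition dnorm_lt {X : BanachSpace} (phi : X -> R) (eps : R) : Prop :=
  exists r, dnorm_is phi r /\ r < eps.

Definition dual_bd {X : BanachSpace} (S : dual X -> Prop) (xs : dual X) : Prop :=
  (forall eps, 0 < eps -> exists ys : dual X, S ys /\ dnorm_lt (fun x => ys x - xs x) eps) /\
  ~ (exists eps, 0 < eps /\
       forall ys : dual X, dnorm_lt (fun x => ys x - xs x) eps -> S ys).

Inductive ERbar := Fin (r : R) | PInf | MInf.

Definition ER_le (a b : ERbar) : Prop :=
  match a, b with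
  | MInf, _ => True
  | _, PInf => True
  | Fin x, Fin y => x <= y
  | _, _ => False
  end.

Definition ER_lt (a b : ERbar) : Prop :=
  match a, b with
  | MInf, MInf => False
  | MInf, _ => True
  | PInf, _ => False
  | Fin _, PInf => True
  | Fin x, Fin y => x < y
  | Fin _, MInf => False
  end.

Definition ER_plus_R (e : ERbar) (r : R) : ERbar :=
  match e with Fin x => Fin (x + r) | PInf => PInf | MInf => MInf end.

Definition ER_proper {X : BanachSpace} (f : X -> ERbar) : Prop :=
  (forall x, f x <> MInf) /\ (exists x, f x <> PInf).

(* convexity = convexity of the epigraph *)
Definition ER_convex {X : BanachSpace} (f : X -> ERbar) : Prop :=
  forall (x y : X) (a b t : R), 0 <= t <= 1 ->
    ER_le (f x) (Fin a) -> ER_le (f y) (Fin b) ->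
    ER_le (f (vadd (vscal t x) (vscal (1 - t) y))) (Fin (t * a + (1 - t) * b)).

(* lower semicontinuity = all sublevel sets are (sequentially) closed *)
Definition ER_lsc {X : BanachSpace} (f : X -> ERbar) : Prop :=
  forall (a : R) (u : nat -> X) (x : X),
    (forall n, ER_le (f (u n)) (Fin a)) ->
    (forall eps, 0 < eps -> exists N, forall n, (N <= n)%nat -> vnorm (vsub (u n) x) < eps) ->
    ER_le (f x) (Fin a).

Definition Gamma0 {X : BanachSpace} (f : X -> ERbar) : Prop :=
  ER_proper f /\ ER_convex f /\ ER_lsc f.

Definition subdiff {X : BanachSpace} (f : X -> ERbar) (x : X) (xs : dual X) : Prop :=
  exists fx, f x = Fin fx /\
    forall u : X, ER_le (Fin (xs (vsub u x) + fx)) (f u).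

Definition S_of {X : BanachSpace} (g : X -> ERbar) (x : X) : Prop := ER_le (g x) (Fin 0).

(* d(x,S) = d, i.e. d is the infimum of { ||u - x|| : u in S } (no such d if S is empty,
   which matches d(x, emptyset) = +infinity) *)
Definition dist_is {X : BanachSpace} (S : X -> Prop) (x : X) (d : R) : Prop :=
  (forall u, S u -> d <= vnorm (vsub u x)) /\
  (forall d', (forall u, S u -> d' <= vnorm (vsub u x)) -> d' <= d).

(* Er g(xb) <= c, where Er g(xb) = liminf_{x -> xb, g(x) > 0} g(x) / d(x, S_g),
   unfolded: for every eps > 0 and every delta > 0 there is x with ||x - xb|| < delta,
   g(x) > 0 and g(x)/d(x,S_g) < c + eps  (terms with g(x) = +oo or d = +oo contribute +oo). *)
Definition Er_le {X : BanachSpace} (g : X -> ERbar) (xb : X) (c : R) : Prop :=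
  forall eps delta, 0 < eps -> 0 < delta ->
    exists x : X, vnorm (vsub x xb) < delta /\
      exists r d, g x = Fin r /\ 0 < r /\ dist_is (S_of g) x d /\ 0 < d /\
                  r / d < c + eps.

(* Since [x^*] lies in the norm closure of the (norm-closed) set [∂f(x̄)], it is itself a
   subgradient, so [f(u) >= <x^*, u - x̄>].  Hence on the sublevel set [S_g] we get
   [<z^*, u - x̄> <= 0], and as [‖z^*‖ = 1] every point [y] with
   [<z^*, y - x̄> = ‖y - x̄‖] is at distance exactly [‖y - x̄‖] from [S_g] ([x̄ ∈ S_g]).
   Along the segment [x_t = x̄ + t (x̂ - x̄)] convexity gives
   [ξ t‖x̂ - x̄‖ <= g(x_t) < t <x̂^* - x^*, x̂ - x̄> + ξ t‖x̂ - x̄‖ <= 2 ξ t‖x̂ - x̄‖],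
   so [g(x_t) / d(x_t, S_g) < 2ξ] for every small [t > 0]. *)

From Stdlib Require Import Reals Lra.
Open Scope R_scope.

Section VectorFacts.

Variable X : BanachSpace.
Implicit Types (x y : X) (a t : R).

Lemma vscal_0l x : vscal 0 x = vzero.
Proof. apply vnorm_eq0. rewrite vnorm_scal, Rabs_R0. ring. Qed.

Lemma vnorm_0 : vnorm (@vzero X) = 0.
Proof. rewrite <- (vscal_0l vzero), vnorm_scal, Rabs_R0. ring. Qed.

Lemma vadd_scalN1 x : vadd x (vscal (-1) x) = vzero.
Proof.
  rewrite <- (vscal_1 X x) at 1. rewrite <- vscal_distr_s.
  replace (1 + -1) with 0 by ring. apply vscal_0l.
Qed.

Lemma vopp_scal x : vopp x = vscal (-1) x.
Proof.
  rewrite <- (vadd_0 X (vopp x)), <- (vadd_scalN1 x), vadd_assoc.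
  rewrite (vadd_comm X (vopp x) x), vadd_opp, vadd_comm. apply vadd_0.
Qed.

Lemma vnorm_ge0 x : 0 <= vnorm x.
Proof.
  pose proof (vnorm_triangle X x (vscal (-1) x)) as H.
  rewrite vadd_scalN1, vnorm_scal, vnorm_0 in H.
  rewrite Rabs_left in H by lra. lra.
Qed.

Lemma vsub_eq0 x y : vsub x y = vzero -> x = y.
Proof.
  intros H. transitivity (vadd (vsub x y) y).
  - unfold vsub. rewrite <- vadd_assoc, (vadd_comm X (vopp y) y), vadd_opp, vadd_0.
    reflexivity.
  - rewrite H, vadd_comm. apply vadd_0.
Qed.

Lemma vnorm_vsub_gt0 x y : x <> y -> 0 < vnorm (vsub x y).
Proof.
  intros Hxy. destruct (vnorm_ge0 (vsub x y)) as [|H]; [assumption|].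
  exfalso. apply Hxy, vsub_eq0, vnorm_eq0. auto.
Qed.

Lemma vnorm_vsubC x y : vnorm (vsub x y) = vnorm (vsub y x).
Proof.
  assert (E : vsub x y = vscal (-1) (vsub y x)).
  { unfold vsub. rewrite !vopp_scal, vscal_distr_v, vscal_assoc.
    replace (-1 * -1) with 1 by ring. rewrite vscal_1, vadd_comm. reflexivity. }
  rewrite E, vnorm_scal, Rabs_left by lra. ring.
Qed.

Lemma vsub_convex t x y : vsub (vadd (vscal t x) (vscal (1 - t) y)) y = vscal t (vsub x y).
Proof.
  unfold vsub. rewrite !vopp_scal, vscal_distr_v, vscal_assoc.
  rewrite <- vadd_assoc, <- vscal_distr_s.
  replace (1 - t + -1) with (t * -1) by ring. reflexivity.
Qed.

Variable l : dual X.

Lemma dual0 : l vzero = 0.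
Proof. pose proof (dlin X l 1 vzero vzero) as H. rewrite vscal_1, vadd_0 in H. lra. Qed.

Lemma dualZ a x : l (vscal a x) = a * l x.
Proof. pose proof (dlin X l a x vzero) as H. rewrite vadd_0, dual0 in H. lra. Qed.

Lemma dualD x y : l (vadd x y) = l x + l y.
Proof. pose proof (dlin X l 1 x y) as H. rewrite vscal_1 in H. lra. Qed.

Lemma dualB x y : l (vsub x y) = l x - l y.
Proof. unfold vsub. rewrite dualD, vopp_scal, dualZ. ring. Qed.

End VectorFacts.

Lemma dnorm_is_le (X : BanachSpace) (phi : X -> R) r :
  (forall a x, phi (vscal a x) = a * phi x) ->
  dnorm_is phi r -> forall v, Rabs (phi v) <= r * vnorm v.
Proof.
  intros Hhom [Hub _] v.
  destruct (vnorm_ge0 X v) as [Hv|Hv].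
  - assert (Hinv : 0 < / vnorm v) by (apply Rinv_0_lt_compat; lra).
    assert (H1 : Rabs (phi (vscal (/ vnorm v) v)) <= r).
    { apply Hub. exists (vscal (/ vnorm v) v). split; [|reflexivity].
      rewrite vnorm_scal, Rabs_pos_eq, Rinv_l; lra. }
    rewrite Hhom, Rabs_mult, Rabs_pos_eq in H1 by lra.
    apply Rmult_le_reg_l with (/ vnorm v); [exact Hinv|].
    replace (/ vnorm v * (r * vnorm v)) with r by (field; lra). exact H1.
  - symmetry in Hv. apply vnorm_eq0 in Hv. subst v.
    rewrite <- (vscal_0l X vzero), Hhom, vnorm_scal, !Rmult_0_l, Rabs_R0. lra.
Qed.

Lemma dnorm_lt_diff_le (X : BanachSpace) (l m : dual X) eps :
  dnorm_lt (fun x => l x - m x) eps -> forall v, Rabs (l v - m v) <= eps * vnorm v.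
Proof.
  intros [r [Hr Hlt]] v.
  assert (Hhom : forall a x, l (vscal a x) - m (vscal a x) = a * (l x - m x))
    by (intros; rewrite !dualZ; ring).
  pose proof (dnorm_is_le X _ r Hhom Hr v).
  pose proof (vnorm_ge0 X v). nra.
Qed.

Lemma subdiff_closed (X : BanachSpace) (f : X -> ERbar) (x : X) (xs : dual X) :
  (forall eps, 0 < eps ->
     exists ys : dual X, subdiff f x ys /\ dnorm_lt (fun w => ys w - xs w) eps) ->
  subdiff f x xs.
Proof.
  intros Hcl.
  destruct (Hcl 1 Rlt_0_1) as [ys0 [[fx [Hfx Hys0]] _]].
  exists fx. split; [exact Hfx|]. intros u. set (w := vsub u x).
  specialize (Hys0 u).
  destruct (f u) as [fu| |] eqn:Efu; simpl in *; [|exact I|contradiction].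
  destruct (Rle_or_lt (xs w + fx) fu) as [|Hgap]; [assumption|exfalso].
  pose proof (vnorm_ge0 X w).
  set (e := (xs w + fx - fu) / (vnorm w + 1)).
  assert (He : 0 < e) by (apply Rdiv_lt_0_compat; lra).
  assert (He1 : e * (vnorm w + 1) = xs w + fx - fu) by (unfold e; field; lra).
  destruct (Hcl e He) as [ys [[fy [Hfy Hys]] Hclose]].
  rewrite Hfx in Hfy. injection Hfy as <-.
  specialize (Hys u). rewrite Efu in Hys. simpl in Hys. fold w in Hys.
  pose proof (dnorm_lt_diff_le X ys xs e Hclose w) as Hdiff.
  pose proof (Rle_abs (- (ys w - xs w))) as Habs. rewrite Rabs_Ropp in Habs.
  nra.
Qed.

Lemma subdiff_le (X : BanachSpace) (f : X -> ERbar) (x : X) (xs : dual X) u fu :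
  subdiff f x xs -> f x = Fin 0 -> f u = Fin fu -> xs (vsub u x) <= fu.
Proof.
  intros [fx [Hfx Hsub]] Hf0 Hfu. rewrite Hf0 in Hfx. injection Hfx as <-.
  specialize (Hsub u). rewrite Hfu in Hsub. simpl in Hsub. lra.
Qed.

Lemma subdiff_not_MInf (X : BanachSpace) (f : X -> ERbar) (x : X) (xs : dual X) u :
  subdiff f x xs -> f u <> MInf.
Proof. intros [fx [_ Hsub]] Hu. specialize (Hsub u). rewrite Hu in Hsub. exact Hsub. Qed.

Lemma exists_small_scale n delta :
  0 < n -> 0 < delta -> exists t, 0 < t <= 1 /\ t * n < delta.
Proof.
  intros Hn Hd. exists (Rmin 1 (delta / (2 * n))).
  assert (Hq : 0 < delta / (2 * n)) by (apply Rdiv_lt_0_compat; lra).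
  split; [split; [apply Rmin_glb_lt; lra | apply Rmin_l]|].
  apply Rle_lt_trans with (delta / (2 * n) * n).
  - apply Rmult_le_compat_r; [lra | apply Rmin_r].
  - replace (delta / (2 * n) * n) with (delta / 2) by (field; lra). lra.
Qed.

Section TiltedFunction.

Variables (X : BanachSpace) (f : X -> ERbar) (xb : X) (xs zs : dual X) (xi : R).

Definition tilted (u : X) : ERbar :=
  ER_plus_R (f u) (- xs (vsub u xb) + xi * zs (vsub u xb)).

Hypotheses (Hf0 : f xb = Fin 0) (Hxs : subdiff f xb xs) (Hxi : 0 < xi)
  (Hzs : dnorm_is zs 1).

Lemma tilted_sublevel_le u : S_of tilted u -> zs (vsub u xb) <= 0.
Proof.
  unfold S_of, tilted.
  destruct (f u) as [fu| |] eqn:Efu; simpl; [|contradiction|].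
  - pose proof (subdiff_le X f xb xs u fu Hxs Hf0 Efu). nra.
  - exfalso. exact (subdiff_not_MInf X f xb xs u Hxs Efu).
Qed.

Lemma tilted_xb_sublevel : S_of tilted xb.
Proof.
  unfold S_of, tilted, vsub. rewrite Hf0, vadd_opp, !dual0. simpl. lra.
Qed.

(* [z^*] has norm one and is [<= 0] on [S_g] relative to [x̄], so it certifies that no point
   of [S_g] is closer to [y] than [x̄] is. *)
Lemma dist_tilted_sublevel y :
  zs (vsub y xb) = vnorm (vsub y xb) -> dist_is (S_of tilted) y (vnorm (vsub y xb)).
Proof.
  intros Hy. split.
  - intros u Hu.
    pose proof (tilted_sublevel_le u Hu) as Hle.
    pose proof (dnorm_is_le X zs 1 (dualZ X zs) Hzs (vsub u y)) as Hb.
    pose proof (Rle_abs (- zs (vsub u y))) as Habs. rewrite Rabs_Ropp in Habs.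
    rewrite !dualB in *. lra.
  - intros d Hd. rewrite vnorm_vsubC. exact (Hd xb tilted_xb_sublevel).
Qed.

Lemma tilted_segment_ratio (xh : X) (xhs : dual X) t :
  ER_convex f -> dnorm_lt (fun x => xhs x - xs x) xi ->
  ER_lt (f xh) (Fin (xhs (vsub xh xb))) ->
  zs (vsub xh xb) = vnorm (vsub xh xb) -> xh <> xb -> 0 < t <= 1 ->
  exists r d, tilted (vadd (vscal t xh) (vscal (1 - t) xb)) = Fin r /\ 0 < r /\
    dist_is (S_of tilted) (vadd (vscal t xh) (vscal (1 - t) xb)) d /\ 0 < d /\
    r / d < 2 * xi.
Proof.
  intros Hconv Hclose Hlt Hzh Hne Ht.
  set (v := vsub xh xb) in *. set (n := vnorm v).
  set (xt := vadd (vscal t xh) (vscal (1 - t) xb)).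
  assert (Hn : 0 < n) by exact (vnorm_vsub_gt0 X xh xb Hne).
  assert (Hxt : vsub xt xb = vscal t v) by apply vsub_convex.
  assert (Hnt : vnorm (vsub xt xb) = t * n)
    by (rewrite Hxt, vnorm_scal, Rabs_pos_eq by lra; reflexivity).
  assert (Hzt : zs (vsub xt xb) = t * n) by (rewrite Hxt, dualZ, Hzh; reflexivity).
  destruct (f xh) as [a| |] eqn:Efh; simpl in Hlt; [|contradiction|].
  2: exfalso; exact (subdiff_not_MInf X f xb xs xh Hxs Efh).
  assert (Hconvt : ER_le (f xt) (Fin (t * a + (1 - t) * 0))).
  { apply Hconv; [lra | rewrite Efh; simpl; lra | rewrite Hf0; simpl; lra]. }
  destruct (f xt) as [b| |] eqn:Eft; simpl in Hconvt; [|contradiction|].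
  2: exfalso; exact (subdiff_not_MInf X f xb xs xt Hxs Eft).
  pose proof (subdiff_le X f xb xs xt b Hxs Hf0 Eft) as Hb.
  rewrite Hxt, dualZ in Hb.
  assert (Hgap : xhs v - xs v <= xi * n).
  { pose proof (dnorm_lt_diff_le X xhs xs xi Hclose v) as Hdiff. fold n in Hdiff.
    pose proof (Rle_abs (xhs v - xs v)). lra. }
  exists (b + (- (t * xs v) + xi * (t * n))), (t * n).
  assert (Htn : 0 < t * n) by nra.
  split; [unfold tilted; rewrite Eft, Hzt, Hxt, dualZ; reflexivity|].
  split; [nra|].
  split; [rewrite <- Hnt; apply dist_tilted_sublevel; rewrite Hzt, Hnt; reflexivity|].
  split; [exact Htn|].
  apply Rmult_lt_reg_r with (t * n); [exact Htn|].
  unfold Rdiv. rewrite Rmult_assoc, Rinv_l by lra.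
  assert (t * a < t * xhs v) by (apply Rmult_lt_compat_l; lra).
  assert (t * (xhs v - xs v) <= t * (xi * n)) by (apply Rmult_le_compat_l; lra).
  nra.
Qed.

End TiltedFunction.

Theorem mainTheorem4 (X : BanachSpace) (f : X -> ERbar) (xb : X) (xs : dual X)
  (xi : R) (xhs : dual X) (xh : X) (zs : dual X) :
  Gamma0 f ->
  f xb = Fin 0 ->
  dual_bd (subdiff f xb) xs ->
  0 < xi ->
  ~ subdiff f xb xhs ->
  dnorm_lt (fun x => xhs x - xs x) xi ->
  xh <> xb ->
  ER_lt (f xh) (Fin (xhs (vsub xh xb))) ->
  dnorm_is zs 1 ->
  zs (vsub xh xb) = vnorm (vsub xh xb) ->
  Er_le (fun u => ER_plus_R (f u) (- xs (vsub u xb) + xi * zs (vsub u xb))) xb (2 * xi).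
Proof.
  intros [_ [Hconv _]] Hf0 [Hcl _] Hxi _ Hclose Hne Hlt Hzs Hzh eps delta Heps Hdelta.
  pose proof (subdiff_closed X f xb xs Hcl) as Hxs.
  destruct (exists_small_scale (vnorm (vsub xh xb)) delta (vnorm_vsub_gt0 X xh xb Hne) Hdelta)
    as [t [Ht Htdelta]].
  exists (vadd (vscal t xh) (vscal (1 - t) xb)). split.
  - rewrite vsub_convex, vnorm_scal, Rabs_pos_eq by lra. exact Htdelta.
  - destruct (tilted_segment_ratio X f xb xs zs xi Hf0 Hxs Hxi Hzs xh xhs t
                Hconv Hclose Hlt Hzh Hne Ht) as [r [d [Hr [Hr0 [Hd [Hd0 Hratio]]]]]].
    exists r, d. do 4 (split; [assumption|]). lra.
Qed.
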